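(* The categories ${}_H\mathcal M^{par}$ and $\mathbb T({}_H\mathcal M)$ are both equivalent to the category $\mathbb D({}_H\mathcal M)$.
   Context: Throughout, $k$ is a field and $H$ is a Hopf algebra over $k$ with bijective antipode $S$ and Sweedler notation $\Delta(h)=h_{(1)}\otimes h_{(2)}$. A partial $H$-module is a vector space $M$ with linear $\pi:H\to\mathrm{End}_k(M)$ satisfying, for all $h,k\in H$: - $\pi(1_H)=\mathrm{id}$; - $\pi(h)\pi(k_{(1)})\pi(S(k_{(2)}))=\pi(hk_{(1)})\pi(S(k_{(2)}))$; - $\pi(h_{(1)})\pi(S(h_{(2)}))\pi(k)=\pi(h_{(1)})\pi(S(h_{(2)})k)$; - $\pi(h)\pi(S(k_{(1)}))\pi(k_{(2)})=\pi(hS(k_{(1)}))\pi(k_{(2)})$; - $\pi(S(h_{(1)}))\pi(h_{(2)})\pi(k)=\pi(S(h_{(1)}))\pi(h_{(2)}k)$. Partial $H$-modules with linear maps commuting with all $\pi(h)$ form ${}_H\mathcal M^{par}$. For a left $H$-module $M$ and linear projection $T$, put $T_h(m)=h_{(1)}\triangleright T(S(h_{(2)})\triangleright m)$. $T$ satisfies the c-condition if $T_h\circ T=T\circ T_h$ for all $h$. Then $T(M)$ is a partial $H$-module via $\pi_T(h)(m)=T(h\triangleright m)$. The category $\mathbb T({}_H\mathcal M)$: - objects are pairs $(M,T)$, $M$ a left $H$-module, $T$ a projection satisfying the c-condition; - morphisms $(M,T)\to(N,S)$ are linear maps $f:T(M)\to S(N)$ with $f(T(h\triangleright m))=S(h\triangleright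 f(m))$ for $m\in T(M)$. A dilation of a partial $H$-module $(P,\rho)$ is $((N,T),\theta)$ with $N$ a left $H$-module, $T$ a projection on $N$ satisfying the c-condition, and $\theta:P\to T(N)$ an isomorphism of partial $H$-modules onto $(T(N),\pi_T)$. It is proper if $N$ is generated as an $H$-module by $T(N)$, and minimal if $N$ has no nonzero $H$-submodule annihilated by $T$. The category $\mathbb D({}_H\mathcal M)$: - objects are pairs $(M,T)$ with $M$ a left $H$-module and $T$ a projection satisfying the c-condition, such that $((M,T),\iota)$, with $\iota:T(M)\to M$ the inclusion, is a proper and minimal dilation of the partial $H$-module $(T(M),\pi_T)$; - morphisms $(M,T)\to(N,S)$ are $H$-linear maps $f:M\to N$ with $S\circ f=f\circ T$. *)

From HB Require Import structures.
From mathcomp Require Import all_boot all_order all_algebra.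
Set Implicit Arguments. Unset Strict Implicit. Unset Printing Implicit Defensive.
Import GRing.Theory.
Local Open Scope ring_scope.

(* Hom-sets carry an equality [heq] (used for morphisms that are       *)
(* represented by functions only relevant on part of their domain).    *)
Record cat := Cat {
  ob : Type;
  hom : ob -> ob -> Type;
  heq : forall a b, hom a b -> hom a b -> Prop;
  idm : forall a, hom a a;
  comp : forall a b c, hom b c -> hom a b -> hom a c }.
Arguments hom : clear implicits.
Arguments heq {_ _ _}. Arguments idm {_}. Arguments comp {_ _ _ _}.

Record functor (C D : cat) := Functor {
  fob : ob C -> ob D;
  fhom : forall a b, hom C a b -> hom D (fob a) (fob b);
  fhom_heq : forall a b (f g : hom C a b), heq f g -> heq (fhom f) (fhom g);
  fhom_id : forall a, heq (fhom (idm a)) (idm (fob a));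
  fhom_comp : forall a b c (g : hom C b c) (f : hom C a b),
      heq (fhom (comp g f)) (comp (fhom g) (fhom f)) }.
Arguments fob {_ _}. Arguments fhom {_ _} _ {_ _}.

Definition natiso_id (C D : cat) (F : functor C D) (G : functor D C) : Prop :=
  exists (al : forall a, hom C (fob G (fob F a)) a)
         (be : forall a, hom C a (fob G (fob F a))),
    [/\ (forall a, heq (comp (al a) (be a)) (idm a)),
        (forall a, heq (comp (be a) (al a)) (idm _)) &
        (forall a b (f : hom C a b),
            heq (comp f (al a)) (comp (al b) (fhom G (fhom F f))))].

Definition equivalent (C D : cat) : Prop :=
  exists (F : functor C D) (G : functor D C), natiso_id F G /\ natiso_id G F.

Section Hopf.
Variables (k : fieldType) (H : algType k).

Definition klin (U V : lmodType k) (f : U -> V) : Prop :=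
  forall (c : k) x y, f (c *: x + y) = c *: f x + f y.

Definition bilin (V : lmodType k) (B : H -> H -> V) : Prop :=
  (forall a, klin (B a)) /\ (forall b, klin (fun a => B a b)).

Definition trilin (V : lmodType k) (C : H -> H -> H -> V) : Prop :=
  [/\ (forall a b, klin (C a b)), (forall a c, klin (fun b => C a b c))
    & (forall b c, klin (fun a => C a b c))].

(* Delta(h) = \sum_(p <- delta h) p.1 (x) p.2 ; sw delta h B = \sum B(h_(1), h_(2)) *)
Definition sw (delta : H -> seq (H * H)) (V : zmodType) (h : H) (B : H -> H -> V) : V :=
  \sum_(p <- delta h) B p.1 p.2.

Record hopf := Hopf {
  delta : H -> seq (H * H);
  eps : H -> k;
  antipode : H -> H;
  (* Delta is a well-defined linear map H -> H (x) H *)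
  delta_lin : forall (V : lmodType k) (B : H -> H -> V), bilin B ->
      klin (fun h => sw delta h B);
  delta_coass : forall (V : lmodType k) (C : H -> H -> H -> V), trilin C ->
      forall h, sw delta h (fun a b => sw delta a (fun a1 a2 => C a1 a2 b))
              = sw delta h (fun a b => sw delta b (fun b1 b2 => C a b1 b2));
  delta_one : forall (V : lmodType k) (B : H -> H -> V), bilin B ->
      sw delta 1 B = B 1 1;
  delta_mul : forall (V : lmodType k) (B : H -> H -> V), bilin B ->
      forall h g, sw delta (h * g) B
        = sw delta h (fun a b => sw delta g (fun c d => B (a * c) (b * d)));
  eps_lin : forall (c : k) x y, eps (c *: x + y) = c * eps x + eps y;
  eps_one : eps 1 = 1;
  eps_mul : forall h g, eps (h * g) = eps h * eps g;
  counit_l : forall h, sw delta h (fun a b => eps a *: b) = h;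
  counit_r : forall h, sw delta h (fun a b => eps b *: a) = h;
  antipode_lin : klin antipode;
  antipode_l : forall h, sw delta h (fun a b => antipode a * b) = eps h *: 1;
  antipode_r : forall h, sw delta h (fun a b => a * antipode b) = eps h *: 1;
  antipode_bij : bijective antipode }.

End Hopf.

Section Modules.
Variables (k : fieldType) (H : algType k) (HS : hopf H).
Local Notation S := (antipode HS).
Local Notation sw := (sw (delta HS)).

Record pmod := PMod {
  pm_sp : lmodType k;
  pm_pi : H -> pm_sp -> pm_sp;
  pm_lin : forall h, klin (pm_pi h);
  pm_linH : forall (c : k) h g m, pm_pi (c *: h + g) m = c *: pm_pi h m + pm_pi g m;
  pm_one : forall m, pm_pi 1 m = m;
  pm_ax1 : forall h g m,
      pm_pi h (sw g (fun a b => pm_pi a (pm_pi (S b) m)))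
      = sw g (fun a b => pm_pi (h * a) (pm_pi (S b) m));
  pm_ax2 : forall h g m,
      sw h (fun a b => pm_pi a (pm_pi (S b) (pm_pi g m)))
      = sw h (fun a b => pm_pi a (pm_pi (S b * g) m));
  pm_ax3 : forall h g m,
      pm_pi h (sw g (fun a b => pm_pi (S a) (pm_pi b m)))
      = sw g (fun a b => pm_pi (h * S a) (pm_pi b m));
  pm_ax4 : forall h g m,
      sw h (fun a b => pm_pi (S a) (pm_pi b (pm_pi g m)))
      = sw h (fun a b => pm_pi (S a) (pm_pi (b * g) m)) }.
Arguments pm_pi : clear implicits.

Record pm_hom (M N : pmod) := PMHom {
  ph_fun : pm_sp M -> pm_sp N;
  ph_lin : klin ph_fun;
  ph_comm : forall h m, ph_fun (pm_pi M h m) = pm_pi N h (ph_fun m) }.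

Definition pm_heq (M N : pmod) (f g : pm_hom M N) := forall m, ph_fun f m = ph_fun g m.

Lemma klin_id (U : lmodType k) : klin (fun x : U => x).
Proof. by []. Qed.

Lemma klin_comp (U V W : lmodType k) (f : U -> V) (g : V -> W) :
  klin f -> klin g -> klin (fun x => g (f x)).
Proof. by move=> hf hg c x y; rewrite hf hg. Qed.

Definition pm_id (M : pmod) : pm_hom M M :=
  @PMHom M M (fun x => x) (@klin_id _) (fun _ _ => erefl).

Definition pm_comp (M N P : pmod) (g : pm_hom N P) (f : pm_hom M N) : pm_hom M P.
Proof.
refine (@PMHom M P (fun x => ph_fun g (ph_fun f x))
  (klin_comp (ph_lin f) (ph_lin g)) _).
by move=> h m; rewrite ph_comm ph_comm.
Defined.

Definition PMcat : cat := @Cat pmod pm_hom pm_heq pm_id pm_comp.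

Record hmod := HMod {
  hm_sp : lmodType k;
  hm_act : H -> hm_sp -> hm_sp;
  hm_lin : forall h, klin (hm_act h);
  hm_linH : forall (c : k) h g m, hm_act (c *: h + g) m = c *: hm_act h m + hm_act g m;
  hm_one : forall m, hm_act 1 m = m;
  hm_mul : forall h g m, hm_act (h * g) m = hm_act h (hm_act g m) }.
Arguments hm_act : clear implicits.

Definition Tsub (M : hmod) (T : hm_sp M -> hm_sp M) (h : H) (m : hm_sp M) :=
  sw h (fun a b => hm_act M a (T (hm_act M (S b) m))).

Definition c_condition (M : hmod) (T : hm_sp M -> hm_sp M) : Prop :=
  forall h m, Tsub T h (T m) = T (Tsub T h m).

Record tobj := TObj {
  t_mod : hmod;
  t_proj : hm_sp t_mod -> hm_sp t_mod;
  t_lin : klin t_proj;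
  t_idem : forall m, t_proj (t_proj m) = t_proj m;
  t_cc : c_condition t_proj }.
Arguments t_proj : clear implicits.

Definition inim (M : hmod) (T : hm_sp M -> hm_sp M) (m : hm_sp M) : Prop :=
  exists x, T x = m.

(* a morphism T(M) -> S(N) is represented by a function M -> N, whose values
   outside T(M) are irrelevant (see [tm_heq]) *)
Record tm_hom (X Y : tobj) := TMHom {
  th_fun : hm_sp (t_mod X) -> hm_sp (t_mod Y);
  th_in : forall m, inim (t_proj X) m -> inim (t_proj Y) (th_fun m);
  th_lin : forall (c : k) x y, inim (t_proj X) x -> inim (t_proj X) y ->
      th_fun (c *: x + y) = c *: th_fun x + th_fun y;
  th_comm : forall h m, inim (t_proj X) m ->
      th_fun (t_proj X (hm_act _ h m)) = t_proj Y (hm_act _ h (th_fun m)) }.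

Definition tm_heq (X Y : tobj) (f g : tm_hom X Y) :=
  forall m, inim (t_proj X) m -> th_fun f m = th_fun g m.

Definition tm_id (X : tobj) : tm_hom X X.
Proof. by refine (@TMHom X X (fun x => x) (fun m h => h) _ _). Defined.

Definition tm_comp (X Y Z : tobj) (g : tm_hom Y Z) (f : tm_hom X Y) : tm_hom X Z.
Proof.
refine (@TMHom X Z (fun x => th_fun g (th_fun f x)) _ _ _).
- by move=> m hm; apply: th_in; apply: th_in.
- by move=> c x y hx hy; rewrite th_lin // th_lin //; apply: th_in.
- by move=> h m hm; rewrite th_comm // th_comm //; apply: th_in.
Defined.

Definition TMcat : cat := @Cat tobj tm_hom tm_heq tm_id tm_comp.

Definition is_hsub (M : hmod) (P : hm_sp M -> Prop) : Prop :=
  [/\ P 0, (forall (c : k) x y, P x -> P y -> P (c *: x + y))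
    & (forall h x, P x -> P (hm_act M h x))].

Definition dil_proper (N : hmod) (T : hm_sp N -> hm_sp N) : Prop :=
  forall P, is_hsub P -> (forall m, inim T m -> P m) -> forall m, P m.

Definition dil_minimal (N : hmod) (T : hm_sp N -> hm_sp N) : Prop :=
  forall P, is_hsub P -> (forall m, P m -> T m = 0) -> forall m, P m -> m = 0.

(* objects of D(_H M): ((M,T), inclusion) is a proper and minimal dilation
   of (T(M), pi_T); the dilation property itself is automatic for the
   inclusion *)
Record dobj := DObj {
  d_t : tobj;
  d_proper : dil_proper (t_proj d_t);
  d_minimal : dil_minimal (t_proj d_t) }.

Record d_hom (X Y : dobj) := DHom {
  dh_fun : hm_sp (t_mod (d_t X)) -> hm_sp (t_mod (d_t Y));
  dh_lin : klin dh_fun;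
  dh_H : forall h m, dh_fun (hm_act _ h m) = hm_act _ h (dh_fun m);
  dh_T : forall m, t_proj (d_t Y) (dh_fun m) = dh_fun (t_proj (d_t X) m) }.

Definition d_heq (X Y : dobj) (f g : d_hom X Y) := forall m, dh_fun f m = dh_fun g m.

Definition d_id (X : dobj) : d_hom X X :=
  @DHom X X (fun x => x) (@klin_id _) (fun _ _ => erefl) (fun _ => erefl).

Definition d_comp (X Y Z : dobj) (g : d_hom Y Z) (f : d_hom X Y) : d_hom X Z.
Proof.
refine (@DHom X Z (fun x => dh_fun g (dh_fun f x))
  (klin_comp (dh_lin f) (dh_lin g)) _ _).
- by move=> h m; rewrite !dh_H.
- by move=> m; rewrite !dh_T.
Defined.

Definition Dcat : cat := @Cat dobj d_hom d_heq d_id d_comp.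

End Modules.

(* A projection T satisfying the c-condition turns T(M) into a partial module
   with pi(h) m = T (h m): the two partial-module axioms in which S(k_(2)) occurs
   reduce to the c-condition, and the two in which S(k_(1)) occurs reduce to its
   mirror image  S(h_(1)) T(h_(2) T m) = T (S(h_(1)) T(h_(2) m)),  which follows
   from the c-condition by coassociativity and the antipode axiom.
   Conversely, a partial module P has a standard dilation: the H-module of maps
   f : H -> P spanned by y |-> pi(y h) m, with (h f)(y) = f(y h) and projection
   f |-> (y |-> pi(y) f(1)); it is proper and minimal, and its image is P again.
   For an object (M, T) of D, m |-> (y |-> T(y m)) maps M into the standard
   dilation of T(M) because M is generated by T(M), and is injective because its
   kernel is a submodule killed by T; it is onto by construction. For an object of
   T(_H M) the same map is an isomorphism on T(M), which is all a morphism sees. *)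

From Pilot Require Import Defs.
From HB Require Import structures.
From mathcomp Require Import all_boot all_order all_algebra.
From mathcomp Require Import boolp functions.
Set Implicit Arguments. Unset Strict Implicit. Unset Printing Implicit Defensive.
Import GRing.Theory.
Local Open Scope ring_scope.

Section KLinear.
Variables (k : fieldType) (U V : lmodType k) (f : U -> V).
Hypothesis f_lin : klin f.

Lemma klin0 : f 0 = 0.
Proof.
have := f_lin 1 0 0; rewrite scaler0 addr0 scale1r => e.
by apply/eqP; rewrite -(subrr (f 0)) {2}e addrK.
Qed.

Lemma klinD x y : f (x + y) = f x + f y.
Proof. by have := f_lin 1 x y; rewrite !scale1r. Qed.

Lemma klinZ c x : f (c *: x) = c *: f x.
Proof. by have := f_lin c x 0; rewrite !addr0 klin0 addr0. Qed.

Lemma klinB x y : f (x - y) = f x - f y.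
Proof. by have := f_lin (-1) y x; rewrite !scaleN1r addrC => ->; rewrite addrC. Qed.

Lemma klin_sum (I : Type) (s : seq I) (F : I -> U) :
  f (\sum_(i <- s) F i) = \sum_(i <- s) f (F i).
Proof. by elim: s => [|i s IH]; rewrite ?big_nil ?klin0 // !big_cons klinD IH. Qed.

End KLinear.

Record lpred (k : fieldType) (V : lmodType k) := LPred {
  lpred_mem :> V -> Prop;
  lpred0 : lpred_mem 0;
  lpredL : forall (c : k) x y, lpred_mem x -> lpred_mem y -> lpred_mem (c *: x + y) }.

Section LinearSubspace.
Variables (k : fieldType) (V : lmodType k) (L : lpred V).

Definition lpred_bool : {pred V} := fun x => `[< L x >].

Fact lpred_bool_submod_closed : GRing.submod_closed lpred_bool.
Proof.
split; first exact/asboolP/lpred0.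
by move=> c u v /asboolP Lu /asboolP Lv; apply/asboolP/lpredL.
Qed.

HB.instance Definition _ :=
  GRing.isSubmodClosed.Build k V lpred_bool lpred_bool_submod_closed.

Record lsub := LSub { lval :> V; lval_mem : lval \in lpred_bool }.
HB.instance Definition _ := [isSub for lval].
HB.instance Definition _ := [Choice of lsub by <:].
HB.instance Definition _ := [SubChoice_isSubLmodule of lsub by <:].

Definition lsub_of (x : V) (Lx : L x) : lsub := LSub (asboolT Lx).

Lemma lvalP (x : lsub) : L (lval x).
Proof. exact/asboolP/lval_mem. Qed.

Lemma lval_inj : injective lval.
Proof. exact: val_inj. Qed.

Lemma klin_lval : klin lval.
Proof. by []. Qed.

End LinearSubspace.

Section HopfModules.
Variables (k : fieldType) (H : algType k) (HS : hopf H).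
Local Notation S := (antipode HS).
Local Notation sw := (sw (delta HS)).
Local Notation eps := (eps HS).
Local Notation act M := (@hm_act k H M).

Lemma eq_sw (V : zmodType) h (B B' : H -> H -> V) :
  (forall a b, B a b = B' a b) -> sw h B = sw h B'.
Proof. by move=> eB; apply: eq_bigr => p _; apply: eB. Qed.

Lemma swD (V : zmodType) h (B B' : H -> H -> V) :
  sw h (fun a b => B a b + B' a b) = sw h B + sw h B'.
Proof. exact: big_split. Qed.

Lemma swZ (V : lmodType k) h c (B : H -> H -> V) :
  sw h (fun a b => c *: B a b) = c *: sw h B.
Proof. by rewrite /Defs.sw scaler_sumr. Qed.

Lemma sw_sum (V : zmodType) (I : Type) (s : seq I) h (F : I -> H -> H -> V) :
  sw h (fun a b => \sum_(i <- s) F i a b) = \sum_(i <- s) sw h (F i).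
Proof. exact: exchange_big. Qed.

Lemma klin_sw (U V : lmodType k) (f : U -> V) h (B : H -> H -> U) :
  klin f -> f (sw h B) = sw h (fun a b => f (B a b)).
Proof. by move=> f_lin; apply: klin_sum. Qed.

Lemma S_lin c x y : S (c *: x + y) = c *: S x + S y.
Proof. exact: antipode_lin. Qed.

Section ModuleAction.
Variable M : hmod H.

Lemma klin_act_l m : klin (fun h : H => act M h m).
Proof. by move=> c x y; rewrite hm_linH. Qed.

Lemma act0 h : act M h 0 = 0.
Proof. exact: klin0 (hm_lin h). Qed.

Lemma actZl c h m : act M (c *: h) m = c *: act M h m.
Proof. by have /= := klinZ (klin_act_l m) c h. Qed.

Lemma act_alg c m : act M (c *: 1) m = c *: m.
Proof. by rewrite actZl hm_one. Qed.

Lemma act_sw h (B : H -> H -> H) m :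
  act M (sw h B) m = sw h (fun a b => act M (B a b) m).
Proof. by have /= := klin_sw h B (klin_act_l m). Qed.

End ModuleAction.

Section Projection.
Variables (M : hmod H) (T : hm_sp M -> hm_sp M).
Hypothesis T_lin : klin T.
Local Notation Tsub := (Tsub HS T).

Lemma klin_T_act h : klin (fun m => T (act M h m)).
Proof. by move=> c x y; rewrite hm_lin T_lin. Qed.

Lemma klin_act_T h : klin (fun m => act M h (T m)).
Proof. by move=> c x y; rewrite T_lin hm_lin. Qed.

Lemma Tsub_lin h : klin (Tsub h).
Proof.
move=> c x y; rewrite /Defs.Tsub -swZ -swD; apply: eq_sw => a b.
by rewrite hm_lin T_lin hm_lin.
Qed.

Lemma Tsub_linH c h g m : Tsub (c *: h + g) m = c *: Tsub h m + Tsub g m.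
Proof.
apply: (delta_lin HS (B := fun a b => act M a (T (act M (S b) m)))).
split=> [a|b] c' x y /=; last by rewrite hm_linH.
by rewrite S_lin hm_linH T_lin hm_lin.
Qed.

Lemma klin_T_actS_l w : klin (fun h => T (act M (S h) w)).
Proof. by move=> c x y; rewrite S_lin hm_linH T_lin. Qed.

Lemma act_T_sw u y : act M u (T y) = sw u (fun a b => Tsub a (act M b y)).
Proof.
rewrite /Defs.Tsub (delta_coass HS
  (C := fun c d b => act M c (T (act M (S d) (act M b y))))); last first.
  split=> [a b|a c|b c] c' x z /=.
  - by rewrite hm_linH hm_lin T_lin hm_lin.
  - by rewrite S_lin hm_linH T_lin hm_lin.
  - by rewrite hm_linH.
have antipode_cancel a b :
    sw b (fun c d => act M a (T (act M (S c) (act M d y)))) = eps b *: act M a (T y).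
  rewrite -(klin_sw _ _ (klin_act_T a)).
  under eq_sw do rewrite -hm_mul.
  by rewrite -act_sw antipode_l act_alg (klinZ T_lin) (klinZ (hm_lin a)).
rewrite (eq_sw _ antipode_cancel).
under eq_sw do rewrite -actZl.
by rewrite -act_sw counit_r.
Qed.

Definition Tsub_rev h m := sw h (fun a b => act M (S a) (T (act M b m))).

Lemma act_S_Tsub a w :
  sw a (fun a1 a2 => act M (S a1) (Tsub a2 w)) = T (act M (S a) w).
Proof.
have expand a1 a2 : act M (S a1) (Tsub a2 w)
    = sw a2 (fun c d => act M (S a1 * c) (T (act M (S d) w))).
  by rewrite /Defs.Tsub (klin_sw _ _ (hm_lin _)); apply: eq_sw => c d; rewrite hm_mul.
rewrite (eq_sw _ expand) -(delta_coass HS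
  (C := fun c d e => act M (S c * d) (T (act M (S e) w)))); last first.
  split=> [a1 b1|a1 c1|b1 c1] c' x z /=.
  - by rewrite S_lin hm_linH T_lin hm_lin.
  - by rewrite mulrDr -scalerAr hm_linH.
  - by rewrite S_lin mulrDl -scalerAl hm_linH.
have antipode_cancel x e : sw x (fun c d => act M (S c * d) (T (act M (S e) w)))
    = eps x *: T (act M (S e) w).
  by rewrite -act_sw antipode_l act_alg.
rewrite (eq_sw _ antipode_cancel).
transitivity (T (act M (S (sw a (fun x e => eps x *: e))) w)); last by rewrite counit_l.
rewrite (klin_sw _ _ (klin_T_actS_l w)).
by apply: eq_sw => x e; have /= -> := klinZ (klin_T_actS_l w) (eps x) e.
Qed.

Hypothesis T_cc : c_condition HS T.

Lemma Tsub_rev_T h y : Tsub_rev h (T y) = T (Tsub_rev h y).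
Proof.
rewrite /Tsub_rev.
under eq_sw => a b do rewrite (act_T_sw b y) (klin_sw _ _ (klin_act_T _)).
rewrite -(delta_coass HS (C := fun a c d => act M (S a) (T (Tsub c (act M d y))))); last first.
  split=> [a b|a c|b c] c' x z /=.
  - by rewrite hm_linH Tsub_lin T_lin hm_lin.
  - by rewrite Tsub_linH T_lin hm_lin.
  - by rewrite S_lin hm_linH.
under eq_sw do under eq_sw do rewrite -T_cc.
under eq_sw do rewrite act_S_Tsub.
by rewrite (klin_sw _ _ T_lin).
Qed.

End Projection.

Section ImagePartialModule.
Variable X : tobj HS.
Local Notation M := (t_mod X).
Local Notation T := (@t_proj _ _ HS X).
Let T_lin := @t_lin _ _ HS X.
Let T_idem := @t_idem _ _ HS X.
Let T_cc := @t_cc _ _ HS X.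

Lemma img_closed c x y : T x = x -> T y = y -> T (c *: x + y) = c *: x + y.
Proof. by move=> Tx Ty; rewrite T_lin Tx Ty. Qed.

Definition img_lpred : lpred (hm_sp M) :=
  @LPred k _ (fun m => T m = m) (klin0 T_lin) img_closed.

Definition img_sp : lmodType k := lsub img_lpred.

Definition img_pi (h : H) (m : img_sp) : img_sp :=
  lsub_of (L := img_lpred) (T_idem (act M h (lval m))).

Lemma img_fixed (m : img_sp) : T (lval m) = lval m.
Proof. exact: lvalP m. Qed.

Lemma lval_sw h (B : H -> H -> img_sp) :
  lval (sw h B) = sw h (fun a b => lval (B a b)).
Proof. exact: klin_sw (@klin_lval _ _ _). Qed.

Lemma img_pi_lin h : klin (img_pi h).
Proof. by move=> c x y; apply: lval_inj; rewrite /= hm_lin T_lin. Qed.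

Lemma img_pi_linH c h g m : img_pi (c *: h + g) m = c *: img_pi h m + img_pi g m.
Proof. by apply: lval_inj; rewrite /= hm_linH T_lin. Qed.

Lemma img_pi_one m : img_pi 1 m = m.
Proof. by apply: lval_inj; rewrite /= hm_one img_fixed. Qed.

Lemma img_pi_ax1 h g m :
  img_pi h (sw g (fun a b => img_pi a (img_pi (S b) m)))
  = sw g (fun a b => img_pi (h * a) (img_pi (S b) m)).
Proof.
apply: lval_inj; rewrite /= !lval_sw /= -(klin_sw _ _ T_lin).
rewrite -/(Tsub HS T g _) -T_cc img_fixed (klin_sw _ _ (klin_T_act T_lin h)).
by apply: eq_sw => a b; rewrite hm_mul.
Qed.

Lemma img_pi_ax2 h g m :
  sw h (fun a b => img_pi a (img_pi (S b) (img_pi g m)))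
  = sw h (fun a b => img_pi a (img_pi (S b * g) m)).
Proof.
apply: lval_inj; rewrite !lval_sw /= -(klin_sw _ _ T_lin).
rewrite -/(Tsub HS T h _) T_cc T_idem (klin_sw _ _ T_lin).
by apply: eq_sw => a b; rewrite hm_mul.
Qed.

Lemma img_pi_ax3 h g m :
  img_pi h (sw g (fun a b => img_pi (S a) (img_pi b m)))
  = sw g (fun a b => img_pi (h * S a) (img_pi b m)).
Proof.
apply: lval_inj; rewrite /= !lval_sw /= -(klin_sw _ _ T_lin).
rewrite -/(Tsub_rev T g _) -(Tsub_rev_T T_lin T_cc) img_fixed.
rewrite (klin_sw _ _ (klin_T_act T_lin h)).
by apply: eq_sw => a b; rewrite hm_mul.
Qed.

Lemma img_pi_ax4 h g m :
  sw h (fun a b => img_pi (S a) (img_pi b (img_pi g m)))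
  = sw h (fun a b => img_pi (S a) (img_pi (b * g) m)).
Proof.
apply: lval_inj; rewrite !lval_sw /= -(klin_sw _ _ T_lin).
rewrite -/(Tsub_rev T h _) (Tsub_rev_T T_lin T_cc) T_idem (klin_sw _ _ T_lin).
by apply: eq_sw => a b; rewrite hm_mul.
Qed.

Definition img_pmod : pmod HS := @PMod k H HS img_sp img_pi img_pi_lin
  img_pi_linH img_pi_one img_pi_ax1 img_pi_ax2 img_pi_ax3 img_pi_ax4.

End ImagePartialModule.

Section StandardDilation.
Variable P : pmod HS.
Local Notation pi := (@pm_pi _ _ HS P).
Local Notation PV := (pm_sp P).

Definition dil_span (f : H -> PV) :=
  exists s : seq (H * PV), f = fun y => \sum_(p <- s) pi (y * p.1) p.2.

Lemma dil_span0 : dil_span 0.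
Proof. by exists [::]; apply: funext => y; rewrite big_nil. Qed.

Lemma dil_spanL c f g : dil_span f -> dil_span g -> dil_span (c *: f + g).
Proof.
move=> [s1 ->] [s2 ->]; rewrite !fctE.
exists ([seq (p.1, c *: p.2) | p <- s1] ++ s2).
apply: funext => y; rewrite big_cat big_map scaler_sumr; congr (_ + _).
by apply: eq_bigr => p _; rewrite (klinZ (pm_lin _)).
Qed.

Definition dil_lpred : lpred (H -> PV) := @LPred k _ dil_span dil_span0 dil_spanL.

Definition dil_sp : lmodType k := lsub dil_lpred.

Lemma dil_span_shift h f : dil_span f -> dil_span (fun y => f (y * h)).
Proof.
move=> [s ->]; exists [seq (h * p.1, p.2) | p <- s].
by apply: funext => y; rewrite big_map; apply: eq_bigr => p _; rewrite mulrA.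
Qed.

Lemma dil_span_lin f : dil_span f -> klin f.
Proof.
move=> [s ->] c x y; rewrite scaler_sumr -big_split; apply: eq_bigr => p _ /=.
by rewrite mulrDl -scalerAl pm_linH.
Qed.

Lemma dil_span_pi m : dil_span (fun y => pi y m).
Proof. by exists [:: (1, m)]; apply: funext => y; rewrite big_seq1 mulr1. Qed.

Definition dil_act (h : H) (f : dil_sp) : dil_sp :=
  lsub_of (L := dil_lpred) (dil_span_shift h (lvalP f)).

Definition dil_emb (m : PV) : dil_sp := lsub_of (L := dil_lpred) (dil_span_pi m).

Definition dil_proj (f : dil_sp) : dil_sp := dil_emb (lval f 1).

Lemma lval_dil_sw h (B : H -> H -> dil_sp) y :
  lval (sw h B) y = sw h (fun a b => lval (B a b) y).
Proof. by rewrite (klin_sw _ _ (@klin_lval _ _ _)) /Defs.sw fct_sumE. Qed.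

Lemma dil_act_lin h : klin (dil_act h).
Proof. by move=> c x y; apply: lval_inj; apply: funext. Qed.

Lemma dil_act_linH c h g f : dil_act (c *: h + g) f = c *: dil_act h f + dil_act g f.
Proof.
apply: lval_inj; apply: funext => y /=.
by rewrite mulrDr -scalerAr (dil_span_lin (lvalP f)).
Qed.

Lemma dil_act_one f : dil_act 1 f = f.
Proof. by apply: lval_inj; apply: funext => y /=; rewrite mulr1. Qed.

Lemma dil_act_mul h g f : dil_act (h * g) f = dil_act h (dil_act g f).
Proof. by apply: lval_inj; apply: funext => y /=; rewrite mulrA. Qed.

Definition dil_hmod : hmod H :=
  @HMod k H dil_sp dil_act dil_act_lin dil_act_linH dil_act_one dil_act_mul.

Lemma dil_proj_lin : klin (dil_proj : hm_sp dil_hmod -> hm_sp dil_hmod).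
Proof. by move=> c x y; apply: lval_inj; apply: funext => z /=; rewrite pm_lin. Qed.

Lemma dil_proj_emb m : dil_proj (dil_emb m) = dil_emb m.
Proof. by apply: lval_inj; apply: funext => z /=; rewrite pm_one. Qed.

Lemma dil_proj_idem (f : hm_sp dil_hmod) : dil_proj (dil_proj f) = dil_proj f.
Proof. exact: dil_proj_emb. Qed.

(* On a generator y |-> pi (y h) m the c-condition is pm_ax2 followed by pm_ax1. *)
Lemma dil_proj_cc : c_condition HS (dil_proj : hm_sp dil_hmod -> hm_sp dil_hmod).
Proof.
move=> h f; apply: lval_inj; apply: funext => x.
rewrite /Defs.Tsub /= !lval_dil_sw /=.
have [s ->] := lvalP f.
under eq_sw do rewrite !mul1r (klin_sum (pm_lin _)) (klin_sum (pm_lin _)).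
under [in RHS]eq_sw do rewrite !mul1r (klin_sum (pm_lin _)).
rewrite !sw_sum (klin_sum (pm_lin _)); apply: eq_bigr => p _.
by rewrite mul1r -pm_ax2 pm_ax1.
Qed.

Definition dil_tobj : tobj HS :=
  @TObj k H HS dil_hmod dil_proj dil_proj_lin dil_proj_idem dil_proj_cc.

Lemma dil_proj_proper : dil_proper (dil_proj : hm_sp dil_hmod -> hm_sp dil_hmod).
Proof.
move=> Q [Q0 QL Qact] Qimg f.
have [s fE] := lvalP f.
have -> : f = \sum_(p <- s) dil_act p.1 (dil_emb p.2).
  by apply: lval_inj; rewrite fE (klin_sum (@klin_lval _ _ _)) fct_sumE.
elim: s {fE} => [|p s IH]; first by rewrite big_nil.
rewrite big_cons -(scale1r (dil_act _ _)); apply: QL => //.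
by apply: Qact; apply: Qimg; exists (dil_emb p.2); apply: dil_proj_emb.
Qed.

Lemma dil_proj_minimal : dil_minimal (dil_proj : hm_sp dil_hmod -> hm_sp dil_hmod).
Proof.
move=> Q [_ _ Qact] Qker f Qf; apply: lval_inj; apply: funext => x.
have /(congr1 (fun g : dil_sp => lval g 1)) /= := Qker _ (Qact x _ Qf).
by rewrite pm_one mul1r.
Qed.

Definition dil_dobj : dobj HS :=
  @DObj k H HS dil_tobj dil_proj_proper dil_proj_minimal.

End StandardDilation.

Lemma inim_fixed (X : tobj HS) m : inim (@t_proj _ _ HS X) m -> t_proj m = m.
Proof. by move=> [x <-]; rewrite t_idem. Qed.

Lemma inim_lval (X : tobj HS) (m : img_sp X) : inim (@t_proj _ _ HS X) (lval m).
Proof. by exists (lval m); apply: img_fixed. Qed.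

Lemma dil_span_map (P1 P2 : pmod HS) (f : pm_hom P1 P2) (g : H -> pm_sp P1) :
  dil_span g -> dil_span (fun y => ph_fun f (g y)).
Proof.
move=> [s ->]; exists [seq (p.1, ph_fun f p.2) | p <- s].
apply: funext => y; rewrite (klin_sum (ph_lin f)) big_map.
by apply: eq_bigr => p _; rewrite ph_comm.
Qed.

Definition dil_map_fun (P1 P2 : pmod HS) (f : pm_hom P1 P2) (g : dil_sp P1) : dil_sp P2 :=
  lsub_of (L := dil_lpred P2) (dil_span_map f (lvalP g)).

Definition dil_map (P1 P2 : pmod HS) (f : pm_hom P1 P2) :
  d_hom (dil_dobj P1) (dil_dobj P2).
Proof.
refine (@DHom k H HS (dil_dobj P1) (dil_dobj P2) (dil_map_fun f) _ _ _).
- by move=> c x y; apply: lval_inj; apply: funext => z /=; rewrite ph_lin.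
- by move=> h m; apply: lval_inj; apply: funext.
- by move=> m; apply: lval_inj; apply: funext => z /=; rewrite ph_comm.
Defined.

Definition img_map_fun (X Y : tobj HS) (f : tm_hom X Y) (m : img_sp X) : img_sp Y :=
  lsub_of (L := img_lpred Y) (inim_fixed (th_in f (inim_lval m))).

Definition img_map (X Y : tobj HS) (f : tm_hom X Y) : pm_hom (img_pmod X) (img_pmod Y).
Proof.
refine (@PMHom k H HS (img_pmod X) (img_pmod Y) (img_map_fun f) _ _).
- by move=> c x y; apply: lval_inj; rewrite /= th_lin //; apply: inim_lval.
- by move=> h m; apply: lval_inj; rewrite /= th_comm //; apply: inim_lval.
Defined.

Definition d_hom_tm (X Y : dobj HS) (f : d_hom X Y) : tm_hom (d_t X) (d_t Y).
Proof.
refine (@TMHom k H HS (d_t X) (d_t Y) (dh_fun f) _ _ _).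
- by move=> m [x <-]; exists (dh_fun f x); rewrite dh_T.
- by move=> c x y _ _; rewrite dh_lin.
- by move=> h m _; rewrite -dh_T dh_H.
Defined.

Definition dil_functor : functor (PMcat HS) (Dcat HS).
Proof.
refine (@Functor (PMcat HS) (Dcat HS) dil_dobj (fun P1 P2 f => dil_map f) _ _ _).
- by move=> P1 P2 f g fg m; apply: lval_inj; apply: funext => z /=; rewrite fg.
- by move=> P m; apply: lval_inj; apply: funext.
- by move=> P1 P2 P3 g f m; apply: lval_inj; apply: funext.
Defined.

Definition img_d_functor : functor (Dcat HS) (PMcat HS).
Proof.
refine (@Functor (Dcat HS) (PMcat HS) (fun X => img_pmod (d_t X))
  (fun X Y f => img_map (d_hom_tm f)) _ _ _).
- by move=> X Y f g fg m; apply: lval_inj; rewrite /= fg.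
- by move=> X m; apply: lval_inj.
- by move=> X Y Z g f m; apply: lval_inj.
Defined.

Definition forget_d_functor : functor (Dcat HS) (TMcat HS).
Proof.
refine (@Functor (Dcat HS) (TMcat HS) (@d_t _ _ HS) (fun X Y f => d_hom_tm f) _ _ _).
- by move=> X Y f g fg m _; apply: fg.
- by move=> X m _.
- by move=> X Y Z g f m _.
Defined.

Definition dil_img_functor : functor (TMcat HS) (Dcat HS).
Proof.
refine (@Functor (TMcat HS) (Dcat HS) (fun X => dil_dobj (img_pmod X))
  (fun X Y f => dil_map (img_map f)) _ _ _).
- move=> X Y f g fg m; apply: lval_inj; apply: funext => z; apply: lval_inj => /=.
  by rewrite fg //; apply: inim_lval.
- by move=> X m; apply: lval_inj; apply: funext => z; apply: lval_inj.
- by move=> X Y Z g f m; apply: lval_inj; apply: funext => z; apply: lval_inj.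
Defined.

Section PartialModuleIso.
Variable P : pmod HS.

Definition img_dil_counit : pm_hom (img_pmod (dil_tobj P)) P.
Proof.
refine (@PMHom k H HS (img_pmod (dil_tobj P)) P (fun m => lval (lval m) 1) _ _).
- by move=> c x y.
- by move=> h m; rewrite /= pm_one mul1r -{1}(img_fixed m).
Defined.

Definition img_dil_unit : pm_hom P (img_pmod (dil_tobj P)).
Proof.
refine (@PMHom k H HS P (img_pmod (dil_tobj P))
  (fun m => lsub_of (L := img_lpred (dil_tobj P)) (dil_proj_emb m)) _ _).
- by move=> c x y; apply: lval_inj; apply: lval_inj; apply: funext => z /=; rewrite pm_lin.
- by move=> h m; apply: lval_inj; apply: lval_inj; apply: funext => z /=; rewrite mul1r.
Defined.

End PartialModuleIso.

Lemma img_dil_iso : natiso_id dil_functor img_d_functor.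
Proof.
exists img_dil_counit, img_dil_unit; split.
- by move=> P m /=; rewrite pm_one.
- move=> P m; apply: lval_inj; rewrite /= -[RHS](img_fixed m).
  by apply: lval_inj; apply: funext.
- by move=> P1 P2 f m.
Qed.

Section ProjectionIso.
Variable X : tobj HS.

Definition tobj_counit : tm_hom (dil_tobj (img_pmod X)) X.
Proof.
refine (@TMHom k H HS (dil_tobj (img_pmod X)) X (fun f => lval (lval f 1)) _ _ _).
- by move=> f _; exists (lval (lval f 1)); apply: img_fixed.
- by move=> c x y _ _.
- move=> h f /inim_fixed fE.
  transitivity (lval (lval f h)); first by rewrite /= hm_one mul1r img_fixed.
  by rewrite -{1}fE.
Defined.

Definition tobj_unit_fun (m : hm_sp (t_mod X)) : dil_sp (img_pmod X) :=
  dil_emb (P := img_pmod X) (lsub_of (L := img_lpred X) (t_idem m)).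

Definition tobj_unit : tm_hom X (dil_tobj (img_pmod X)).
Proof.
refine (@TMHom k H HS X (dil_tobj (img_pmod X)) tobj_unit_fun _ _ _).
- by move=> m _; exists (tobj_unit_fun m); apply: dil_proj_emb.
- move=> c x y _ _; apply: lval_inj; apply: funext => z; apply: lval_inj.
  by rewrite /= t_lin hm_lin t_lin.
- move=> h m /inim_fixed mE; apply: lval_inj; apply: funext => z; apply: lval_inj.
  by rewrite /= t_idem mul1r mE.
Defined.

End ProjectionIso.

Lemma dil_img_tobj_iso : natiso_id dil_img_functor forget_d_functor.
Proof.
exists tobj_counit, tobj_unit; split.
- by move=> X m /inim_fixed mE /=; rewrite hm_one t_idem mE.
- move=> X f /inim_fixed fE; rewrite -[RHS]fE.
  apply: lval_inj; apply: funext => z; apply: lval_inj.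
  by rewrite /= img_fixed.
- by move=> X Y f m.
Qed.

Section DilationIso.
Variable X : dobj HS.
Local Notation M := (t_mod (d_t X)).
Local Notation T := (@t_proj _ _ HS (d_t X)).
Local Notation PX := (img_pmod (d_t X)).
Let T_lin := @t_lin _ _ HS (d_t X).
Let T_idem := @t_idem _ _ HS (d_t X).

Definition orbit_fun (m : hm_sp M) (y : H) : img_sp (d_t X) :=
  lsub_of (L := img_lpred (d_t X)) (T_idem (act M y m)).

Lemma orbit_fun0 : orbit_fun 0 = 0.
Proof. by apply: funext => y; apply: lval_inj; rewrite /= act0 (klin0 T_lin). Qed.

Lemma orbit_funL c x y : orbit_fun (c *: x + y) = c *: orbit_fun x + orbit_fun y.
Proof. by apply: funext => z; apply: lval_inj; rewrite /= hm_lin T_lin. Qed.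

Lemma orbit_fun_act h x : orbit_fun (act M h x) = fun y => orbit_fun x (y * h).
Proof. by apply: funext => z; apply: lval_inj; rewrite /= hm_mul. Qed.

Lemma orbit_fun_span m : @dil_span PX (orbit_fun m).
Proof.
apply: (@d_proper _ _ HS X (fun m => @dil_span PX (orbit_fun m))).
- split; first by rewrite orbit_fun0; apply: dil_span0.
  + by move=> c x y sx sy; rewrite orbit_funL; apply: dil_spanL.
  + by move=> h x sx; rewrite orbit_fun_act; apply: dil_span_shift.
- move=> x /inim_fixed xE.
  have -> : orbit_fun x = fun y => pm_pi (p := PX) y (lsub_of (L := img_lpred (d_t X)) (T_idem x)).
    by apply: funext => z; apply: lval_inj; rewrite /= xE.
  exact: dil_span_pi.
Qed.

Definition to_dil (m : hm_sp M) : dil_sp PX := lsub_of (L := dil_lpred PX) (orbit_fun_span m).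

Lemma to_dil_lin : klin to_dil.
Proof. by move=> c x y; apply: lval_inj; rewrite /= orbit_funL. Qed.

Lemma to_dil_act h m : to_dil (act M h m) = dil_act h (to_dil m).
Proof. by apply: lval_inj; rewrite /= orbit_fun_act. Qed.

Lemma to_dil_proj m : dil_proj (to_dil m) = to_dil (T m).
Proof. by apply: lval_inj; apply: funext => y; apply: lval_inj; rewrite /= hm_one. Qed.

(* The kernel of [to_dil] is an H-submodule annihilated by T. *)
Lemma to_dil_inj : injective to_dil.
Proof.
move=> m m' /(congr1 (@lval _ _ _)) /= mm'.
apply/eqP; rewrite -subr_eq0; apply/eqP.
apply: (@d_minimal _ _ HS X (fun z => forall y, T (act M y z) = 0)).
- split.
  + by move=> y; rewrite act0 (klin0 T_lin).
  + by move=> c x y Kx Ky z; rewrite hm_lin T_lin Kx Ky scaler0 addr0.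
  + by move=> h x Kx y; rewrite -hm_mul Kx.
- by move=> z Kz; have := Kz 1; rewrite hm_one.
- move=> y; rewrite (klinB (hm_lin y)) (klinB T_lin).
  by have /= -> := congr1 (fun f => lval (f y)) mm'; rewrite subrr.
Qed.

Lemma to_dil_surj (f : dil_sp PX) : exists m, to_dil m = f.
Proof.
have [s fE] := lvalP f.
exists (\sum_(p <- s) act M p.1 (lval p.2)).
apply: lval_inj; rewrite fE; apply: funext => y; apply: lval_inj => /=.
rewrite (klin_sum (hm_lin y)) (klin_sum T_lin) (klin_sum (@klin_lval _ _ _)).
by apply: eq_bigr => p _; rewrite /= hm_mul.
Qed.

Definition from_dil (f : dil_sp PX) : hm_sp M := proj1_sig (cid (to_dil_surj f)).

Lemma from_dilK : cancel from_dil to_dil.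
Proof. by move=> f; apply: (proj2_sig (cid (to_dil_surj f))). Qed.

Lemma to_dilK : cancel to_dil from_dil.
Proof. by move=> m; apply: to_dil_inj; rewrite from_dilK. Qed.

Definition from_dil_hom : d_hom (dil_dobj PX) X.
Proof.
refine (@DHom k H HS (dil_dobj PX) X from_dil _ _ _).
- by move=> c x y; apply: to_dil_inj; rewrite to_dil_lin !from_dilK.
- by move=> h f; apply: to_dil_inj; rewrite to_dil_act !from_dilK.
- by move=> f; apply: to_dil_inj; rewrite -to_dil_proj !from_dilK.
Defined.

Definition to_dil_hom : d_hom X (dil_dobj PX) :=
  @DHom k H HS X (dil_dobj PX) to_dil to_dil_lin to_dil_act to_dil_proj.

End DilationIso.

Lemma from_dil_natural (X Y : dobj HS) (g : d_hom X Y) (f : dil_sp (img_pmod (d_t X))) :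
  dh_fun g (from_dil f) = from_dil (dil_map_fun (img_map (d_hom_tm g)) f).
Proof.
rewrite -{2}(from_dilK f); apply: to_dil_inj; rewrite from_dilK.
by apply: lval_inj; apply: funext => y; apply: lval_inj; rewrite /= -dh_H dh_T.
Qed.

Lemma dil_img_dobj_iso : natiso_id img_d_functor dil_functor.
Proof.
exists from_dil_hom, to_dil_hom; split.
- by move=> X m; apply: to_dilK.
- by move=> X f; apply: from_dilK.
- by move=> X Y g f; apply: from_dil_natural.
Qed.

End HopfModules.

Theorem mainTheorem11 (k : fieldType) (H : algType k) (HS : hopf H) :
  equivalent (PMcat HS) (Dcat HS) /\ equivalent (TMcat HS) (Dcat HS).
Proof.
split.
- exists (dil_functor HS), (img_d_functor HS).
  by split; [exact: img_dil_iso | exact: dil_img_dobj_iso].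
- exists (dil_img_functor HS), (forget_d_functor HS).
  by split; [exact: dil_img_tobj_iso | exact: dil_img_dobj_iso].
Qed.
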